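(* Let $\mathcal{A}=\{H_{e_i}:\boldsymbol\alpha_{e_i}\cdot\mathbf{x}=0\mid 1\le i\le m\}$ be a linear multi-arrangement in $\mathbb{R}^n$ (each $\boldsymbol\alpha_{e_i}\ne 0$), totally ordered by $H_{e_1}\prec\cdots\prec H_{e_m}$, and let $\mathscr{B}_k$ and $\phi_k$ be as in the context. Then for each $k=1,\dots,m$, $\phi_k$ is a well-defined bijection from $\mathscr{B}_{k-1}$ onto $\mathscr{B}_k$. Consequently, the map sending a region $\Delta\in\mathcal{R}(\mathcal{A})$ to the unique $\mathcal{B}\in\mathrm{NBC}(\mathcal{A})$ with $\phi_m\circ\cdots\circ\phi_1(\emptyset,\Delta)=(\mathcal{B},\cap\mathcal{B})$ is a bijection from $\mathcal{R}(\mathcal{A})$ onto $\mathrm{NBC}(\mathcal{A})$.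
   Context: For a (multi)set $\mathcal{B}$ of hyperplanes, $\cap\mathcal{B}=\bigcap_{H\in\mathcal{B}}H$ (with $\cap\emptyset=\mathbb{R}^n$). A circuit of $\mathcal{A}$ is a minimal sub(multi)set $\mathcal{B}\subseteq\mathcal{A}$ with $\cap\mathcal{B}\ne\emptyset$ and $\dim(\cap\mathcal{B})+|\mathcal{B}|=n+1$; a broken circuit is a circuit with its $\prec$-maximal element removed; $\mathcal{B}\subseteq\mathcal{A}$ is an NBC subset if it contains no broken circuit (and $\cap\mathcal{B}\neq\emptyset$); $\mathrm{NBC}(\mathcal{A})$ is the set of NBC subsets. For a finite multiset $\mathcal{H}$ of hyperplanes in an affine subspace $W$, its regions are the connected components of $W-\bigcup_{H\in\mathcal{H}}H$ (if $\mathcal{H}=\emptyset$, the single region is $W$); $\mathcal{R}(\cdot)$ denotes the set of regions. $H_e^+:\boldsymbol\alpha_e\cdot\mathbf{x}>0$, $H_e^-:\boldsymbol\alpha_e\cdot\mathbf{x}<0$. Let $\mathcal{A}_k=\{H_{e_i}:i\le k\}$, $\mathcal{A}_k^c=\mathcal{A}-\mathcal{A}_k$, and for $\mathcal{B}\subseteq\mathcal{A}$, $\mathcal{A}_k^c/\mathcal{B}$ is the multi-arrangement in $\cap\mathcal{B}$ consisting of $(\cap\mathcal{B})\cap H$ for $H\in\mathcal{A}_k^c$ with $(\cap\mathcal{B})\cap H\ne\cap\mathcal{B}$ and $\ne\emptyset$. $\mathscr{B}_k=\{(\mathcal{B}_k,\Delta_k):\mathcal{B}_k\subseteq\mathcal{A}_k,\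 \mathcal{B}_k\in\mathrm{NBC}(\mathcal{A}),\ \Delta_k\in\mathcal{R}(\mathcal{A}_k^c/\mathcal{B}_k)\}$. For $(\mathcal{B}_{k-1},\Delta_{k-1})\in\mathscr{B}_{k-1}$ let $\Delta_k'$ be the unique region of $\mathcal{A}_k^c/\mathcal{B}_{k-1}$ containing $\Delta_{k-1}$, and set $\phi_k(\mathcal{B}_{k-1},\Delta_{k-1})=(\mathcal{B}_{k-1}\cup\{H_{e_k}\},\Delta_k'\cap H_{e_k})$ if $\Delta_{k-1}\subseteq H_{e_k}^+$ and $\Delta_{k-1}\ne\Delta_k'$; $=(\mathcal{B}_{k-1},\Delta_{k-1})$ if $\Delta_{k-1}\subseteq H_{e_k}^+$ and $\Delta_{k-1}=\Delta_k'$; $=(\mathcal{B}_{k-1},\Delta_k')$ if $\Delta_{k-1}\subseteq H_{e_k}^-$. *)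

From HB Require Import structures.
From mathcomp Require Import all_boot all_order all_algebra.
From mathcomp Require Import all_classical all_reals all_analysis.
Set Implicit Arguments. Unset Strict Implicit. Unset Printing Implicit Defensive.
Import Order.TTheory GRing.Theory Num.Theory.
Import numFieldTopology.Exports numFieldNormedType.Exports.
Local Open Scope classical_set_scope.
Local Open Scope ring_scope.

(* A linear multi-arrangement A = {H_{e_1}, ..., H_{e_m}} in R^n is given by
   normal vectors alpha : 'I_m -> 'rV[R]_n; the hyperplane H_{e_{i+1}} is
   indexed by the ordinal i : 'I_m, and the total order H_{e_1} < ... < H_{e_m}
   is the order of the indices.  Sub(multi)sets of A are {set 'I_m}. *)

Section Arrangement.
Variables (R : realType) (n m : nat) (alpha : 'I_m -> 'rV[R]_n).

Definition dotv (a x : 'rV[R]_n) : R := \sum_(j < n) a 0 j * x 0 j.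

Definition hyp (i : 'I_m) : set 'rV[R]_n := fun x => dotv (alpha i) x = 0.
Definition hplus (i : 'I_m) : set 'rV[R]_n := fun x => 0 < dotv (alpha i) x.
Definition hminus (i : 'I_m) : set 'rV[R]_n := fun x => dotv (alpha i) x < 0.

Definition capB (B : {set 'I_m}) : set 'rV[R]_n :=
  fun x => forall i, i \in B -> dotv (alpha i) x = 0.

(* dim (cap B): dimension of the linear subspace cap B, computed as the rank
   of the kernel matrix whose row space is exactly
   {x : x *m M = 0} = cap B, where column i of M is alpha_i if i \in B
   and 0 otherwise. *)
Definition capB_mx (B : {set 'I_m}) : 'M[R]_(n, m) :=
  \matrix_(j < n, i < m) (if i \in B then alpha i 0 j else 0).
Definition dim_capB (B : {set 'I_m}) : nat := \rank (kermx (capB_mx B)).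

Definition nonempty (S : set 'rV[R]_n) : Prop := exists x, S x.

Definition circ_prop (B : {set 'I_m}) : Prop :=
  nonempty (capB B) /\ (dim_capB B + #|B| = n.+1)%N.

Definition circuit (C : {set 'I_m}) : Prop :=
  circ_prop C /\ forall D : {set 'I_m}, D \proper C -> ~ circ_prop D.

Definition broken_circuit (D : {set 'I_m}) : Prop :=
  exists C, circuit C /\
    exists2 c, c \in C & (forall i, i \in C -> (i <= c)%N) /\ D = C :\ c.

Definition NBC (B : {set 'I_m}) : Prop :=
  (forall D, broken_circuit D -> ~ (D \subset B)) /\ nonempty (capB B).

Definition region (W U : set 'rV[R]_n) (C : set 'rV[R]_n) : Prop :=
  exists x, (W `\` U) x /\ C = connected_component (W `\` U) x.

Definition region_A (C : set 'rV[R]_n) : Prop :=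
  region setT (fun x => exists i, hyp i x) C.

(* A_k = {H_{e_i} : i <= k}, i.e. indices i with (val i < k);
   A_k^c / B = {(cap B) \cap H : H in A_k^c, (cap B) \cap H <> cap B, <> empty};
   union of its hyperplanes (inside cap B): *)
Definition restr_union (k : nat) (B : {set 'I_m}) : set 'rV[R]_n :=
  fun x => capB B x /\ exists i : 'I_m,
      [/\ (k <= i)%N, (capB B `&` hyp i) <> capB B,
          (capB B `&` hyp i) <> set0 & hyp i x].

Definition region_restr (k : nat) (B : {set 'I_m}) (C : set 'rV[R]_n) : Prop :=
  region (capB B) (restr_union k B) C.

Definition state := ({set 'I_m} * set 'rV[R]_n)%type.

Definition Bset (k : nat) (p : state) : Prop :=
  [/\ p.1 \subset [set i : 'I_m | (i < k)%N], NBC p.1 & region_restr k p.1 p.2].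

(* phi_k, for k = j+1 and e_k = j, as a relation  phi_k(p) = q. *)
Definition phi_rel (j : 'I_m) (p q : state) : Prop :=
  exists D', [/\ region_restr j.+1 p.1 D', p.2 `<=` D' &
    [\/ [/\ p.2 `<=` hplus j, p.2 <> D' & q = (j |: p.1, D' `&` hyp j)],
        [/\ p.2 `<=` hplus j, p.2 = D' & q = p]
      | p.2 `<=` hminus j /\ q = (p.1, D')]].

(* chain k p q  <->  phi_k o ... o phi_1 (p) = q *)
Fixpoint chain (k : nat) (p q : state) : Prop :=
  match k with
  | 0 => q = p
  | k'.+1 => exists r, chain k' p r /\
      (if insub k' is Some j then phi_rel j r q else False)
  end.

End Arrangement.

From HB Require Import structures.
From mathcomp Require Import all_boot all_order all_algebra.
From mathcomp Require Import all_classical all_reals all_analysis.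
From mathcomp Require Import ring lra zify.
Import Order.TTheory GRing.Theory Num.Theory.
Import numFieldTopology.Exports numFieldNormedType.Exports.
Local Open Scope classical_set_scope.
Local Open Scope ring_scope.
Set Implicit Arguments. Unset Strict Implicit. Unset Printing Implicit Defensive.

(* For [x] in [cap B] off the hyperplanes [H_i], [i >= k], the connected component of [x]
   in [cap B] minus these hyperplanes is its sign cell: the [y] such that [alpha_i . y] has
   the sign of [alpha_i . x] for all [i >= k].  A linear form cannot change sign on a
   connected set avoiding its zeros, and sign cells are convex.  In these terms [phi_{j+1}]
   forgets the sign of [alpha_j]: a region on the positive side of [H_j] that is cut by [H_j]
   goes to its trace on [H_j] (and [j] joins [B]), every other region to the larger region
   containing it.  The new set [j |: B] stays NBC since a broken circuit through [j] would
   put a point of the cut region on a later hyperplane.  For surjectivity the key fact is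
   that [cap B] does not lie in [H_c] when [B] is NBC and precedes [c], so points of a
   region can be pushed off [H_j] to either side.  At [k = 0] the states are the regions of
   [A], at [k = m] they are the pairs [(B, cap B)] with [B] NBC. *)

Section DotProduct.
Variables (R : realType) (n : nat).
Implicit Types (a x y : 'rV[R]_n) (s : R).

Lemma dotvD a x y : dotv a (x + y) = dotv a x + dotv a y.
Proof. by rewrite /dotv -big_split; apply: eq_bigr => j _; rewrite mxE mulrDr. Qed.

Lemma dotvZ a s x : dotv a (s *: x) = s * dotv a x.
Proof. by rewrite /dotv mulr_sumr; apply: eq_bigr => j _; rewrite mxE mulrCA. Qed.

Lemma dotv0 a : dotv a 0 = 0.
Proof. by rewrite -(scale0r 0) dotvZ mul0r. Qed.

Lemma dotv_continuous a : continuous (dotv a).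
Proof.
apply: continuous_big => [|j _]; first exact: add_continuous.
move=> x; apply: (@continuousM _ _ (cst (a 0 j)) (fun x : 'rV[R]_n => x 0 j)).
  exact: cst_continuous.
exact: coord_continuous.
Qed.

End DotProduct.

Lemma mulr_self_gt0 (R : realDomainType) (x : R) : x != 0 -> 0 < x * x.
Proof. by move=> x_nz; rewrite -expr2 exprn_even_gt0 // x_nz orbT. Qed.

Lemma setD1_id (T : finType) (A : {set T}) x : x \notin A -> A :\ x = A.
Proof. by move=> xA; apply/finset.setDidPl; rewrite disjoint_sym disjoints1. Qed.

Lemma connected_sign_constant (T : topologicalType) (R : realType) (f : T -> R)
    (S : set T) x y :
  continuous f -> connected S -> (forall z, S z -> f z != 0) -> S x -> S y ->
  0 < f x * f y.
Proof.
move=> f_cont S_conn f_nz Sx Sy; rewrite ltNge; apply/negP => fxy_le0.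
have /connected_intervalP f_itv := connected_continuous_connected S_conn
  (continuous_subspaceT f_cont).
have fx_nz := f_nz x Sx; have fy_nz := f_nz y Sy.
have [z Sz fz0] : (f @` S) 0.
  have [fx_le0|fx_gt0] := lerP (f x) 0.
    apply: (f_itv (f x) (f y)); [by exists x | by exists y | apply/andP; split=> //].
    by rewrite leNgt; apply/negP => fy_lt0; move: fxy_le0; rewrite leNgt; nra.
  apply: (f_itv (f y) (f x)); [by exists y | by exists x | apply/andP; split].
  - by rewrite leNgt; apply/negP => fy_gt0; move: fxy_le0; rewrite leNgt; nra.
  - exact: ltW.
by move: (f_nz z Sz); rewrite fz0 eqxx.
Qed.

Section Arrangement.
Variables (R : realType) (n m : nat) (alpha : 'I_m -> 'rV[R]_n).
Local Notation V := 'rV[R]_n.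
Local Notation dot i x := (dotv (alpha i) x).

Section SignCells.
Variables (W : set V) (P : pred 'I_m).

Definition off_hyps (x : V) : Prop := W x /\ forall i, P i -> dot i x != 0.

Definition sign_cell (x : V) : set V :=
  [set y | W y /\ forall i, P i -> 0 < dot i y * dot i x].

Lemma sign_cell_self x : off_hyps x -> sign_cell x x.
Proof.
by move=> [Wx x_nz]; split=> // i Pi; rewrite mulr_self_gt0 ?x_nz.
Qed.

Lemma sign_cell_off_hyps x y : sign_cell x y -> off_hyps y.
Proof.
move=> [Wy y_sg]; split=> // i Pi; apply/eqP => y0.
by have := y_sg i Pi; rewrite y0 mul0r ltxx.
Qed.

Lemma sign_cell_eq x y : sign_cell x y -> sign_cell y = sign_cell x.
Proof.
move=> [_ y_sg]; apply/seteqP; split=> z [Wz z_sg]; split=> // i Pi;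
  have := y_sg i Pi; have := z_sg i Pi; nra.
Qed.

Hypothesis W_lin : forall x y s t, W x -> W y -> W (s *: x + t *: y).

Lemma sign_cell_conic x y z s t : 0 <= s -> 0 <= t -> 0 < s + t ->
  sign_cell x y -> sign_cell x z -> sign_cell x (s *: y + t *: z).
Proof.
move=> s_ge0 t_ge0 st_gt0 [Wy y_sg] [Wz z_sg]; split; first exact: W_lin.
move=> i Pi; rewrite dotvD !dotvZ mulrDl -!mulrA.
have yA := y_sg i Pi; have zA := z_sg i Pi.
have [s0|s_gt0] := eqVneq s 0.
  by move: st_gt0; rewrite s0 mul0r !add0r => t_gt0; rewrite mulr_gt0.
have : 0 < s * (dot i y * dot i x) by rewrite mulr_gt0 // lt0r s_gt0.
have : 0 <= t * (dot i z * dot i x) by rewrite mulr_ge0 // ltW.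
lra.
Qed.

Lemma sign_cell_perturb z w : off_hyps z -> W w ->
  exists2 e, 0 < e & sign_cell z (z + e *: w).
Proof.
move=> [Wz z_nz] Ww.
pose bound i := `|dot i z| / (`|dot i w| + 1).
set e := \big[Order.min/1]_(i | P i) bound i.
have e_gt0 : 0 < e.
  by apply: lt_bigmin => // i Pi; rewrite divr_gt0 ?normr_gt0 ?z_nz // ltr_wpDl.
exists e => //; split; first by rewrite -[z]scale1r; exact: W_lin.
move=> i Pi; have e_le : e <= bound i by exact: bigmin_le_cond.
rewrite ler_pdivlMr ?ltr_wpDl // in e_le.
rewrite dotvD dotvZ.
set a := dot i z in e_le *; set b := dot i w in e_le *.
have a_gt0 : 0 < `|a| by rewrite normr_gt0 z_nz.
have aa : a * a = `|a| * `|a| by rewrite -normrM ger0_norm // -expr2 sqr_ge0.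
have ba : - (`|b| * `|a|) <= b * a by rewrite -normrM lerNnormlW.
have b_ge0 : 0 <= `|b| by [].
nra.
Qed.

Variable U : set V.
Hypothesis U_hyps : forall x, W x -> U x <-> exists2 i, P i & dot i x = 0.

Lemma off_hypsE x : (W `\` U) x <-> off_hyps x.
Proof.
split=> [[Wx Ux]|[Wx x_nz]].
  by split=> // i Pi; apply/eqP => x0; apply: Ux; apply/U_hyps => //; exists i.
split=> // /(U_hyps Wx) [i Pi x0].
by move: (x_nz i Pi); rewrite x0 eqxx.
Qed.

Lemma connected_component_sign_cell x :
  off_hyps x -> connected_component (W `\` U) x = sign_cell x.
Proof.
move=> x_off; apply/seteqP; split=> y.
- move=> Cy; have /off_hypsE y_off := connected_component_sub Cy.
  split; first by case: y_off.
  move=> i Pi; rewrite mulrC.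
  apply: (@connected_sign_constant _ _ _ (connected_component (W `\` U) x)) => //.
  + exact: dotv_continuous.
  + exact: component_connected.
  + by move=> z /connected_component_sub/off_hypsE[_]; apply.
  + exact/connected_component_refl/off_hypsE.
- move=> cell_y; pose seg t := x + t *: (y - x).
  have segE t : seg t = (1 - t) *: x + t *: y.
    by rewrite /seg scalerBr scalerBl scale1r addrA addrAC.
  have seg_cont : continuous seg.
    move=> t; rewrite /seg.
    apply: (@continuousD _ _ _ (cst x) (fun t : R => t *: (y - x))).
      exact: cst_continuous.
    by apply: continuousZr_tmp; exact: cvg_id.
  apply: (@connected_component_max _ _ (seg @` `[0, 1]) x).
  + by exists 0; rewrite /= ?in_itv /= ?lexx ?ler01 // /seg scale0r addr0.
  + move=> _ [t /= /[!in_itv] /= /andP[t_ge0 t_le1] <-].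
    rewrite segE; apply/off_hypsE/(@sign_cell_off_hyps x)/sign_cell_conic => //.
    * by rewrite subr_ge0.
    * by rewrite subrK ltr01.
    * exact: sign_cell_self.
  + exact: connected_continuous_connected (@segment_connected R 0 1)
      (continuous_subspaceT seg_cont).
  + by exists 1; rewrite /= ?in_itv /= ?lexx ?ler01 // /seg scale1r addrC subrK.
Qed.

Lemma regionE C : region W U C <-> exists2 x, off_hyps x & C = sign_cell x.
Proof.
split=> [[x [/off_hypsE x_off ->]]|[x x_off ->]]; exists x => //.
  by rewrite connected_component_sign_cell.
by split; [exact/off_hypsE | rewrite connected_component_sign_cell].
Qed.

End SignCells.

Local Notation rk S := (\rank (capB_mx alpha S)).
Implicit Types (B C D S T : {set 'I_m}).

Lemma capB_zero S : capB alpha S 0.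
Proof. by move=> i _; rewrite dotv0. Qed.

Lemma capB_lin S x y s t : capB alpha S x -> capB alpha S y ->
  capB alpha S (s *: x + t *: y).
Proof. by move=> Sx Sy i iS; rewrite dotvD !dotvZ Sx // Sy // !mulr0 addr0. Qed.

Lemma capBZ S s x : capB alpha S x -> capB alpha S (s *: x).
Proof. by move=> Sx i iS; rewrite dotvZ Sx // mulr0. Qed.

Lemma capB_subset S T : S \subset T -> capB alpha T `<=` capB alpha S.
Proof. by move=> /fintype.subsetP ST x Tx i /ST; exact: Tx. Qed.

Lemma capBU1 j S : capB alpha (j |: S) = capB alpha S `&` hyp alpha j.
Proof.
apply/seteqP; split=> x.
  by move=> jSx; split=> [i iS|]; apply: jSx; rewrite !inE ?iS ?eqxx ?orbT.
by move=> [Sx xj] i; rewrite in_setU1 => /predU1P[->|/Sx].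
Qed.

Lemma capB_mxP S x : capB alpha S x <-> x *m capB_mx alpha S = 0.
Proof.
split=> [Sx | /rowP Sx i iS].
  apply/rowP => i; rewrite !mxE; case: (boolP (i \in S)) => iS.
    by rewrite -[RHS](Sx i iS); apply: eq_bigr => j _; rewrite mxE iS mulrC.
  by rewrite big1 // => j _; rewrite mxE (negbTE iS) mulr0.
have := Sx i; rewrite !mxE => <-; apply: eq_bigr => j _.
by rewrite mxE iS mulrC.
Qed.

Lemma kermx_capB_sub S T : capB alpha S `<=` capB alpha T ->
  (kermx (capB_mx alpha S) <= kermx (capB_mx alpha T))%MS.
Proof.
move=> ST; apply/sub_kermxP/row_matrixP => i; rewrite row_mul row0.
by apply/capB_mxP/ST/capB_mxP; rewrite -row_mul mulmx_ker row0.
Qed.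

Lemma rank_capB_antimono S T : capB alpha S `<=` capB alpha T -> (rk T <= rk S)%N.
Proof.
move=> /kermx_capB_sub/mxrankS; rewrite !mxrank_ker.
by have := rank_leq_row (capB_mx alpha S); have := rank_leq_row (capB_mx alpha T); lia.
Qed.

Lemma rank_capB_mono S T : S \subset T -> (rk S <= rk T)%N.
Proof. by move=> /capB_subset; exact: rank_capB_antimono. Qed.

Lemma rank_capB0 : rk finset.set0 = 0%N.
Proof. by apply/eqP; rewrite mxrank_eq0; apply/eqP/matrixP => a b; rewrite !mxE inE. Qed.

Lemma rank_capBD1 T i : i \in T -> (rk T <= (rk (T :\ i)).+1)%N.
Proof.
move=> iT; have -> : capB_mx alpha T =
    capB_mx alpha (T :\ i) + (alpha i)^T *m (delta_mx 0 i : 'M[R]_(1, m)).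
  apply/matrixP => a b; rewrite !mxE big_ord1 !mxE in_setD1 eqxx /=.
  by case: (eqVneq b i) => [->|_]; rewrite ?iT ?mulr1 ?add0r ?mulr0 ?addr0.
apply: leq_trans (mxrank_add _ _) _; rewrite -[(rk _).+1]addn1 leq_add2l.
exact: leq_trans (mxrankM_maxl _ _) (rank_leq_col _).
Qed.

Lemma nullity_capB_mono D T : D \subset T -> (#|D| + rk T <= #|T| + rk D)%N.
Proof.
move=> DT; move kT: #|T :\: D| => k; elim: k T kT DT => [|k IH] T kT DT.
  suff -> : T = D by [].
  by apply/eqP; rewrite finset.eqEsubset -finset.setD_eq0 -cards_eq0 kT DT.
have [i /setDP[iT iD]] : exists i, i \in T :\: D by apply/finset.set0Pn; rewrite -card_gt0 kT.
have DTi : D \subset T :\ i by rewrite subsetD1 DT.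
have kTi : #|(T :\ i) :\: D| = k.
  have -> : (T :\ i) :\: D = (T :\: D) :\ i.
    by rewrite finset.setDDl finset.setUC -finset.setDDl.
  by move: kT; rewrite (cardsD1 i (T :\: D)) finset.in_setD iD iT => -[].
have := IH _ kTi DTi; have := rank_capBD1 iT; rewrite (cardsD1 i T) iT; lia.
Qed.

Lemma rank_capB_le_card S : (rk S <= #|S|)%N.
Proof. by have := nullity_capB_mono (finset.sub0set S); rewrite cards0 rank_capB0 addn0. Qed.

Lemma circ_propE S : circ_prop alpha S <-> #|S| = (rk S).+1.
Proof.
rewrite /circ_prop /dim_capB mxrank_ker; have := rank_leq_row (capB_mx alpha S).
by split=> [[_]|S_card]; [lia | split; [exists 0; exact: capB_zero | lia]].
Qed.

Lemma dependent_has_circuit S : (rk S < #|S|)%N ->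
  exists2 C : {set 'I_m}, C \subset S & circuit alpha C.
Proof.
move kS: #|S| => k; elim: k S kS => [|k IH] S kS; first by rewrite ltn0.
move=> S_dep; have [[i [iS Si_dep]]|] :=
  pselect (exists i, i \in S /\ (rk (S :\ i) < #|S :\ i|)%N).
  have Si_card : #|S :\ i| = k by move: kS; rewrite (cardsD1 i S) iS => -[].
  have [|C CS C_circ] := IH (S :\ i) Si_card; first by rewrite -Si_card.
  by exists C => //; exact: fintype.subset_trans CS (finset.subD1set S i).
move=> S_minimal; exists S => //; split.
  have [i iS] : exists i, i \in S by apply/finset.set0Pn; rewrite -card_gt0 kS.
  have := rank_capB_mono (finset.subD1set S i); have := cardsD1 i S; rewrite iS.
  have : ~ (rk (S :\ i) < #|S :\ i|)%N by move=> ?; apply: S_minimal; exists i.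
  by rewrite circ_propE; lia.
move=> D /fintype.properP[DS [i iS iD]] /circ_propE D_card.
have DSi : D \subset S :\ i by rewrite subsetD1 DS.
have : ~ (rk (S :\ i) < #|S :\ i|)%N by move=> ?; apply: S_minimal; exists i.
by have := nullity_capB_mono DSi; lia.
Qed.

Lemma circuit_max C : circuit alpha C ->
  exists2 c, c \in C & forall i, i \in C -> (i <= c)%N.
Proof.
move=> [/circ_propE C_card _].
have [x xC] : exists x, x \in C by apply/finset.set0Pn; rewrite -card_gt0 C_card.
by have [c cC c_max] := arg_maxnP (fun i : 'I_m => val i) xC; exists c.
Qed.

Lemma circuit_capBD1 C c : circuit alpha C -> c \in C ->
  capB alpha (C :\ c) `<=` hyp alpha c.
Proof.
move=> [/circ_propE C_card C_min] cC x Cc_x.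
have Cc_indep : #|C :\ c| <> (rk (C :\ c)).+1.
  by move=> ?; apply: (C_min _ (finset.properD1 cC)); apply/circ_propE.
have same_rank : rk (C :\ c) = rk C.
  have := rank_capB_mono (finset.subD1set C c).
  have := nullity_capB_mono (finset.subD1set C c).
  by have := cardsD1 c C; rewrite cC; lia.
have ker_sub := kermx_capB_sub (capB_subset (finset.subD1set C c)).
have := (mxrank_leqif_eq ker_sub).2; rewrite !mxrank_ker same_rank eqxx.
move=> /esym/andP[_ ker_sup].
have : (x <= kermx (capB_mx alpha (C :\ c)))%MS by apply/sub_kermxP/capB_mxP.
by move=> /submx_trans/(_ ker_sup)/sub_kermxP/capB_mxP; apply.
Qed.

Lemma NBC_subset B B' : NBC alpha B -> B' \subset B -> NBC alpha B'.
Proof.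
move=> [B_nbc _] B'B; split; last by exists 0; exact: capB_zero.
by move=> D D_broken DB'; apply: B_nbc D_broken (fintype.subset_trans DB' B'B).
Qed.

Lemma NBC_set0 : (forall i, alpha i != 0) -> NBC alpha finset.set0.
Proof.
move=> alpha_nz; split; last by exists 0; exact: capB_zero.
move=> D [C [C_circ [c cC [_ ->]]]]; rewrite finset.subset0 => /eqP Cc0.
have [/circ_propE] := C_circ; rewrite (cardsD1 c C) cC Cc0 cards0 => -[/esym/eqP].
rewrite mxrank_eq0 => /eqP C_mx0.
suff /eqP : alpha c = 0 by rewrite (negbTE (alpha_nz c)).
by apply/rowP => j; have := congr1 (fun M : 'M[R]_(n, m) => M j c) C_mx0; rewrite !mxE cC.
Qed.

(* Otherwise [c |: B] is dependent, and removing the maximum of a circuit inside it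
   leaves a broken circuit inside [B], because [c] exceeds every element of [B]. *)
Lemma NBC_capB_not_sub_hyp B (c : 'I_m) : NBC alpha B ->
  (forall b, b \in B -> (b < c)%N) -> exists2 w, capB alpha B w & dot c w != 0.
Proof.
move=> [B_nbc _] B_lt; apply: contrapT => B_in_hyp.
have cB : c \notin B by apply/negP => /B_lt; rewrite ltnn.
have cB_dep : (rk (c |: B) < #|c |: B|)%N.
  have : (rk (c |: B) <= rk B)%N.
    apply: rank_capB_antimono => w Bw; rewrite capBU1; split=> //.
    by apply: contrapT => wc; apply: B_in_hyp; exists w => //; exact/eqP.
  by rewrite cardsU1 cB add1n => /leq_ltn_trans; apply; exact: rank_capB_le_card.
have [C CcB C_circ] := dependent_has_circuit cB_dep.
have [d dC d_max] := circuit_max C_circ.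
apply: (B_nbc (C :\ d)); first by exists C; split=> //; exists d.
apply/fintype.subsetP => i; rewrite in_setD1 => /andP[id iC].
have /setU1P[ic|//] := fintype.subsetP CcB i iC.
have /setU1P[dc|/B_lt d_lt] := fintype.subsetP CcB d dC.
  by move: id; rewrite ic dc eqxx.
by have := d_max i iC; rewrite ic; lia.
Qed.

Lemma NBC_setU1 B (j : 'I_m) z : NBC alpha B -> capB alpha B z -> dot j z = 0 ->
  (forall i : 'I_m, (j < i)%N -> dot i z != 0) -> NBC alpha (j |: B).
Proof.
move=> [B_nbc _] Bz jz z_off; split; last by exists 0; exact: capB_zero.
move=> _ [C [C_circ [c cC [c_max ->]]]] CcjB.
case: (boolP (j \in C :\ c)) => [|jCc].
  rewrite in_setD1 => /andP[jc jC].
  have j_lt : (j < c)%N by rewrite ltn_neqAle c_max // andbT; exact: jc.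
  have /eqP : hyp alpha c z.
    by apply: (circuit_capBD1 C_circ cC); apply: (capB_subset CcjB); rewrite capBU1.
  by rewrite (negbTE (z_off c j_lt)).
apply: (B_nbc (C :\ c)); first by exists C; split=> //; exists c.
apply/fintype.subsetP => i iCc; have /setU1P[ij|//] := fintype.subsetP CcjB i iCc.
by move: jCc; rewrite -ij iCc.
Qed.

(* [cell k B x] is the region of [A_k^c / B] containing [x], see [region_restrE]. *)
Local Notation cell k B := (sign_cell (capB alpha B) (fun i : 'I_m => (k <= i)%N)).
Local Notation generic k B := (off_hyps (capB alpha B) (fun i : 'I_m => (k <= i)%N)).
Local Notation below k := [set i : 'I_m | (i < k)%N].

Lemma region_restrE k B (Delta : set V) : NBC alpha B -> B \subset below k ->
  region_restr alpha k B Delta <-> exists2 x, generic k B x & Delta = cell k B x.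
Proof.
move=> B_nbc /fintype.subsetP B_lt; apply: regionE => [x y s t|x Bx]; first exact: capB_lin.
split=> [[_ [i [ki _ _ ix]]] | [i ki ix]]; first by exists i.
split=> //; exists i; split=> //.
  have B_lt_i b : b \in B -> (b < i)%N by move/B_lt; rewrite inE => /leq_trans; apply.
  move=> hyp_full; have [w Bw /eqP[]] := NBC_capB_not_sub_hyp B_nbc B_lt_i.
  by have [_] : (capB alpha B `&` hyp alpha i) w by rewrite hyp_full.
move=> hyp_empty; have : (capB alpha B `&` hyp alpha i) 0.
  by split; [exact: capB_zero | exact: dotv0].
by rewrite hyp_empty.
Qed.

Lemma BsetE k B (Delta : set V) : Bset alpha k (B, Delta) <->
  [/\ B \subset below k, NBC alpha B & exists2 x, generic k B x & Delta = cell k B x].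
Proof.
split=> [[/= Bk B_nbc /(region_restrE _ B_nbc Bk)]|[Bk B_nbc Delta_cell]] //.
by split=> //=; apply/region_restrE.
Qed.

Lemma generic_succ k B x : generic k B x -> generic k.+1 B x.
Proof. by move=> [Bx x_off]; split=> // i /ltnW; exact: x_off. Qed.

Lemma cell_split (j : 'I_m) B x y :
  cell j B x y <-> cell j.+1 B x y /\ 0 < dot j y * dot j x.
Proof.
split=> [[By y_sg]|[[By y_sg] yj]].
  by split; [split=> // i /ltnW; exact: y_sg | exact: y_sg].
split=> // i; rewrite leq_eqVlt => /predU1P[/val_inj <- //|]; exact: y_sg.
Qed.

Lemma cell_setU1 k j B x : cell k (j |: B) x = cell k B x `&` hyp alpha j.
Proof.
rewrite capBU1; apply/seteqP; split=> y.
  by move=> [[By yj] y_sg]; split.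
by move=> [[By y_sg] yj].
Qed.

Lemma notin_below (j : 'I_m) B : B \subset below j -> j \notin B.
Proof. by move=> Bj; apply/negP => /(fintype.subsetP Bj); rewrite inE /= ltnn. Qed.

Section Step.
Variables (j : 'I_m) (B : {set 'I_m}).
Hypotheses (B_nbc : NBC alpha B) (B_lt : B \subset below j).

Lemma cell_crosses_hyp x z (s : R) : cell j.+1 B x z -> dot j z = 0 -> s != 0 ->
  exists2 y, cell j.+1 B x y & 0 < dot j y * s.
Proof.
move=> z_cell zj s_nz.
have [w Bw wj] : exists2 w, capB alpha B w & dot j w != 0.
  by apply: NBC_capB_not_sub_hyp => // b /(fintype.subsetP B_lt); rewrite inE.
have [e e_gt0 y_cell] := sign_cell_perturb (@capB_lin B)
  (sign_cell_off_hyps z_cell) (capBZ (s * dot j w) Bw).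
exists (z + e *: ((s * dot j w) *: w)); first by rewrite -(sign_cell_eq z_cell).
rewrite dotvD !dotvZ zj add0r.
have -> : e * (s * dot j w * dot j w) * s = e * ((s * dot j w) * (s * dot j w)) by ring.
by rewrite mulr_gt0 // mulr_self_gt0 // mulf_neq0.
Qed.

Lemma cell_meets_hyp x : generic j B x -> 0 < dot j x ->
  cell j B x <> cell j.+1 B x -> exists2 z, cell j.+1 B x z & dot j z = 0.
Proof.
move=> x_gen xj_gt0 cell_ne.
have /existsNP[y /not_implyP[y_cell y_sg]] :
    ~ forall y, cell j.+1 B x y -> 0 < dot j y * dot j x.
  move=> all_pos; apply: cell_ne; apply/seteqP; split=> y; first by case/cell_split.
  by move=> y_cell; apply/cell_split; split; last exact: all_pos.
move/negP: y_sg; rewrite pmulr_lgt0 // -leNgt le_eqVlt => /predU1P[yj0|yj_lt0].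
  by exists y.
exists ((- dot j y) *: x + dot j x *: y); last first.
  by rewrite dotvD !dotvZ mulNr mulrC addNr.
apply: (sign_cell_conic (@capB_lin B)) => //.
- by rewrite oppr_ge0 ltW.
- exact: ltW.
- by rewrite addr_gt0 // oppr_gt0.
- by apply: sign_cell_self; exact: generic_succ.
Qed.

Let B_lt_succ : B \subset below j.+1.
Proof.
by apply: fintype.subset_trans B_lt _; apply/fintype.subsetP => i; rewrite !inE => /ltnW.
Qed.

Lemma generic_split x : generic j B x <-> generic j.+1 B x /\ dot j x != 0.
Proof.
split=> [x_gen|[[Bx x_off] xj]]; first by split; [exact: generic_succ | apply: x_gen.2].
by split=> // i; rewrite leq_eqVlt => /predU1P[/val_inj <- //|]; exact: x_off.
Qed.

(* For [k = j + 1], [Delta_{k-1} = cell j B x] and [Delta'_k = cell j.+1 B x], [cut_by x]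
   is the condition of the first case in the definition of [phi_k]. *)
Definition cut_by x := 0 < dot j x /\ cell j B x <> cell j.+1 B x.

Definition phi_image x : {set 'I_m} * set V :=
  if `[< cut_by x >] then (j |: B, cell j.+1 B x `&` hyp alpha j) else (B, cell j.+1 B x).

Lemma uncut_cell_eq x : ~ cut_by x -> 0 < dot j x -> cell j B x = cell j.+1 B x.
Proof. by move=> uncut xj_gt0; apply: contrapT => cell_ne; apply: uncut. Qed.

Lemma cell_sub_hplus x : generic j B x -> cell j B x `<=` hplus alpha j <-> 0 < dot j x.
Proof.
move=> x_gen; split=> [|xj_gt0 y /cell_split[_]]; first by apply; exact: sign_cell_self.
by rewrite pmulr_lgt0.
Qed.

Lemma cell_sub_hminus x : generic j B x -> cell j B x `<=` hminus alpha j <-> dot j x < 0.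
Proof.
move=> x_gen; split=> [|xj_lt0 y /cell_split[_]]; first by apply; exact: sign_cell_self.
by rewrite nmulr_lgt0.
Qed.

Lemma region_succ_cell x (Delta : set V) : generic j B x ->
  region_restr alpha j.+1 B Delta -> cell j B x `<=` Delta -> Delta = cell j.+1 B x.
Proof.
move=> x_gen /(region_restrE _ B_nbc B_lt_succ)[x' _ ->] /(_ x (sign_cell_self x_gen)).
by move=> /sign_cell_eq.
Qed.

Lemma phi_relE x q : generic j B x ->
  phi_rel alpha j (B, cell j B x) q <-> q = phi_image x.
Proof.
move=> x_gen; have xj_nz : dot j x != 0 by apply: x_gen.2.
rewrite /phi_image; split.
  move=> [Delta [/= Delta_region Delta_sup]].
  rewrite (region_succ_cell x_gen Delta_region Delta_sup).
  case: asboolP => [[xj_gt0 cut]|uncut] [[/(cell_sub_hplus x_gen) xj_gt0' ne ->]|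
    [/(cell_sub_hplus x_gen) xj_gt0' eq ->]|[/(cell_sub_hminus x_gen) xj_lt0 ->]] //.
  - by have := lt_trans xj_lt0 xj_gt0; rewrite ltxx.
  - by case: uncut.
  - by rewrite eq.
move=> ->; exists (cell j.+1 B x); split=> /=.
- by apply/(region_restrE _ B_nbc B_lt_succ); exists x => //; exact: generic_succ.
- by move=> y /cell_split[].
case: asboolP => [[xj_gt0 cut]|uncut].
  by apply: Or31; split=> //; exact/(cell_sub_hplus x_gen).
move: xj_nz; rewrite neq_lt => /orP[xj_lt0|xj_gt0].
  by apply: Or33; split=> //; exact/(cell_sub_hminus x_gen).
apply: Or32; rewrite -uncut_cell_eq //; split=> //; exact/(cell_sub_hplus x_gen).
Qed.

Lemma phi_image_Bset x : generic j B x -> Bset alpha j.+1 (phi_image x).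
Proof.
move=> x_gen; rewrite /phi_image; case: asboolP => [[xj_gt0 cut]|_]; last first.
  by apply/BsetE; split=> //; exists x => //; exact: generic_succ.
have [z z_cell zj] := cell_meets_hyp x_gen xj_gt0 cut.
have [Bz z_off] := sign_cell_off_hyps z_cell.
apply/BsetE; split.
- apply/fintype.subsetP => i; rewrite in_setU1 => /predU1P[-> |/(fintype.subsetP B_lt_succ) //].
  by apply: mem_set => /=.
- exact: NBC_setU1 B_nbc Bz zj z_off.
- exists z; first by split=> //; rewrite capBU1.
  by rewrite cell_setU1 (sign_cell_eq z_cell).
Qed.

Lemma cell_pred_eq x1 x2 : cell j.+1 B x1 = cell j.+1 B x2 ->
  0 < dot j x1 * dot j x2 -> cell j B x1 = cell j B x2.
Proof.
move=> E x12; apply/seteqP; split=> y /cell_split[y_cell y_sg]; apply/cell_split.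
  by split; [rewrite -E | nra].
by split; [rewrite E | nra].
Qed.

Lemma uncut_same_side x1 x2 : generic j B x1 -> generic j B x2 ->
  ~ cut_by x1 -> ~ cut_by x2 -> cell j.+1 B x1 = cell j.+1 B x2 ->
  0 < dot j x1 * dot j x2.
Proof.
have pos_side a b : generic j B b -> ~ cut_by a -> 0 < dot j a ->
    cell j.+1 B a = cell j.+1 B b -> 0 < dot j b * dot j a.
  move=> b_gen uncut aj_gt0 E.
  have : cell j B a b by rewrite uncut_cell_eq // E; exact/sign_cell_self/generic_succ.
  by case/cell_split.
move=> x1_gen x2_gen uncut1 uncut2 E.
move: (x1_gen.2 j (leqnn j)); rewrite neq_lt => /orP[x1j_lt0|x1j_gt0]; last first.
  by rewrite mulrC; exact: pos_side.
move: (x2_gen.2 j (leqnn j)); rewrite neq_lt => /orP[x2j_lt0|x2j_gt0].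
  by rewrite nmulr_rgt0.
exact: pos_side.
Qed.

Lemma phi_image_setD1 x : (phi_image x).1 :\ j = B.
Proof.
have jB := notin_below B_lt.
by rewrite /phi_image; case: asboolP => _ /=; [exact: setU1K | exact: setD1_id].
Qed.

Lemma phi_image_inj x1 x2 : generic j B x1 -> generic j B x2 ->
  phi_image x1 = phi_image x2 -> cell j B x1 = cell j B x2.
Proof.
move=> x1_gen x2_gen; have jB := notin_below B_lt; rewrite /phi_image.
case: asboolP => [[x1j_gt0 cut1]|uncut1]; case: asboolP => [[x2j_gt0 cut2]|uncut2];
  move=> /pair_equal_spec[E1 E2].
- have [z z_cell zj] := cell_meets_hyp x1_gen x1j_gt0 cut1.
  have [/sign_cell_eq cell_eq _] : (cell j.+1 B x2 `&` hyp alpha j) z by rewrite -E2.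
  apply: cell_pred_eq; last exact: mulr_gt0.
  by rewrite -cell_eq (sign_cell_eq z_cell).
- by move: jB; rewrite -E1 setU11.
- by move: jB; rewrite E1 setU11.
- exact: cell_pred_eq E2 (uncut_same_side x1_gen x2_gen uncut1 uncut2 E2).
Qed.

Lemma phi_image_onto_hyp x : generic j.+1 (j |: B) x ->
  exists2 y, generic j B y & phi_image y = (j |: B, cell j.+1 (j |: B) x).
Proof.
move=> [jBx x_off]; have [Bx xj] : capB alpha B x /\ dot j x = 0.
  by move: jBx; rewrite capBU1.
have x_gen : generic j.+1 B x by [].
have [y y_cell] := cell_crosses_hyp (sign_cell_self x_gen) xj (oner_neq0 R).
rewrite mulr1 => yj_gt0.
have y_gen : generic j B y.
  by apply/generic_split; split; [exact: sign_cell_off_hyps y_cell | exact: lt0r_neq0].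
exists y => //; rewrite /phi_image asboolT; last first.
  split=> // cell_eq; have : cell j B y x.
    by rewrite cell_eq (sign_cell_eq y_cell); exact: sign_cell_self.
  by case/cell_split => _; rewrite xj mul0r ltxx.
by rewrite cell_setU1 (sign_cell_eq y_cell).
Qed.

Lemma phi_image_onto_off x : generic j.+1 B x ->
  exists2 y, generic j B y & phi_image y = (B, cell j.+1 B x).
Proof.
move=> x_gen; rewrite /phi_image.
have [[y y_cell yj_lt0]|no_neg] := pselect (exists2 y, cell j.+1 B x y & dot j y < 0).
  exists y.
    by apply/generic_split; split; [exact: sign_cell_off_hyps y_cell | exact: ltr0_neq0].
  rewrite asboolF ?(sign_cell_eq y_cell) // => -[yj_gt0 _].
  by move: yj_lt0; rewrite ltNge ltW.
have cell_pos y : cell j.+1 B x y -> 0 < dot j y.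
  move=> y_cell; rewrite lt_neqAle eq_sym leNgt; apply/andP; split; last first.
    by apply/negP => yj_lt0; apply: no_neg; exists y.
  have N1_nz : (-1 : R) != 0 by rewrite oppr_eq0 oner_eq0.
  apply/eqP => yj0; have [y' y'_cell] := cell_crosses_hyp y_cell yj0 N1_nz.
  by rewrite mulrN1 oppr_gt0 => y'j_lt0; apply: no_neg; exists y'.
have xj_gt0 := cell_pos x (sign_cell_self x_gen).
have cell_eq : cell j B x = cell j.+1 B x.
  apply/seteqP; split=> y; first by case/cell_split.
  by move=> y_cell; apply/cell_split; split=> //; exact: mulr_gt0 (cell_pos y y_cell) _.
exists x; first by apply/generic_split; split=> //; exact: lt0r_neq0.
by rewrite asboolF // => -[_].
Qed.

End Step.

Lemma phi_functional (j : 'I_m) p : Bset alpha j p ->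
  exists q, [/\ Bset alpha j.+1 q, phi_rel alpha j p q &
                forall q', phi_rel alpha j p q' -> q' = q].
Proof.
case: p => B Delta /BsetE[Bj B_nbc [x x_gen ->]].
exists (phi_image j B x); split; first exact: phi_image_Bset.
  exact/phi_relE.
by move=> q'; rewrite phi_relE.
Qed.

Lemma phi_injective (j : 'I_m) p1 p2 q : Bset alpha j p1 -> Bset alpha j p2 ->
  phi_rel alpha j p1 q -> phi_rel alpha j p2 q -> p1 = p2.
Proof.
case: p1 p2 => [B1 Delta1] [B2 Delta2] /BsetE[B1j B1_nbc [x1 x1_gen ->]].
move=> /BsetE[B2j B2_nbc [x2 x2_gen ->]].
rewrite phi_relE // phi_relE // => -> E.
have B12 : B1 = B2.
  by rewrite -(phi_image_setD1 B1j x1) E (phi_image_setD1 B2j).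
by subst B2; congr pair; exact (phi_image_inj B1j x1_gen x2_gen E).
Qed.

Lemma phi_surjective (j : 'I_m) q : Bset alpha j.+1 q ->
  exists p, Bset alpha j p /\ phi_rel alpha j p q.
Proof.
case: q => B' Delta /BsetE[B'j B'_nbc [x x_gen ->]].
pose B := B' :\ j.
have Bj : B \subset below j.
  apply/fintype.subsetP => i; rewrite in_setD1 => /andP[ij /(fintype.subsetP B'j)].
  by rewrite !inE /= => i_lt; rewrite ltn_neqAle -ltnS i_lt andbT; exact: ij.
have B_nbc : NBC alpha B by apply: NBC_subset B'_nbc (finset.subD1set B' j).
have [y y_gen E] : exists2 y, generic j B y & phi_image j B y = (B', cell j.+1 B' x).
  have [jB'|jB'] := boolP (j \in B').
    by rewrite -(finset.setD1K jB'); apply: phi_image_onto_hyp; rewrite ?finset.setD1K.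
  have BB' : B = B' by exact: setD1_id.
  by rewrite BB' in Bj B_nbc *; exact: phi_image_onto_off.
exists (B, cell j B y); split; first by apply/BsetE; split=> //; exists y.
by rewrite phi_relE.
Qed.

Lemma chainS k p q (km : (k < m)%N) :
  chain alpha k.+1 p q <-> exists2 r, chain alpha k p r & phi_rel alpha (Ordinal km) r q.
Proof.
rewrite /=; case: insubP => [j _ jk|]; last by rewrite km.
have -> : j = Ordinal km by apply: val_inj.
by split=> [[r []]|[r]]; exists r.
Qed.

Lemma chain_functional k p : (k <= m)%N -> Bset alpha 0 p ->
  exists q, [/\ Bset alpha k q, chain alpha k p q & forall q', chain alpha k p q' -> q' = q].
Proof.
elim: k => [|k IH] km p0; first by exists p.
have [r [r_B p_r r_uniq]] := IH (ltnW km) p0.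
have [q [q_B r_q q_uniq]] := phi_functional r_B (j := Ordinal km).
exists q; split=> //; first by apply/chainS; exists r.
by move=> q' /chainS[r' /r_uniq -> /q_uniq].
Qed.

Lemma chain_Bset k p q : (k <= m)%N -> Bset alpha 0 p -> chain alpha k p q -> Bset alpha k q.
Proof. by move=> km /(chain_functional km)[q' [q'_B _ q'_uniq]] /q'_uniq ->. Qed.

Lemma chain_injective k p1 p2 q : (k <= m)%N -> Bset alpha 0 p1 -> Bset alpha 0 p2 ->
  chain alpha k p1 q -> chain alpha k p2 q -> p1 = p2.
Proof.
elim: k q => [|k IH] q km p1_B p2_B; first by move=> /= -> ->.
move=> /chainS[r1 p1_r1 r1_q] /chainS[r2 p2_r2 r2_q].
have r12 : r1 = r2 := phi_injective (j := Ordinal km) (chain_Bset (ltnW km) p1_B p1_r1)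
  (chain_Bset (ltnW km) p2_B p2_r2) r1_q r2_q.
by apply: (IH r1 (ltnW km)) => //; rewrite r12.
Qed.

Lemma chain_surjective k q : (k <= m)%N -> Bset alpha k q ->
  exists2 p, Bset alpha 0 p & chain alpha k p q.
Proof.
elim: k q => [|k IH] q km q_B; first by exists q.
have [r [r_B r_q]] := phi_surjective q_B (j := Ordinal km).
have [p p_B p_r] := IH r (ltnW km) r_B.
by exists p => //; apply/chainS; exists r.
Qed.

Lemma Bset_first B (Delta : set V) : (forall i, alpha i != 0) ->
  Bset alpha 0 (B, Delta) <-> B = finset.set0 /\ region_A alpha Delta.
Proof.
move=> alpha_nz; rewrite BsetE /region_A (@regionE setT (fun _ => true)) //; last first.
  by move=> x _; split=> [[i xi]|[i _ xi]]; exists i.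
have capB0 : capB alpha finset.set0 = setT by apply/seteqP; split=> // x _ i; rewrite inE.
split=> [[B0 _ Delta_cell]|[-> Delta_cell]].
  suff B_0 : B = finset.set0 by move: Delta_cell; rewrite B_0 capB0.
  apply/eqP; rewrite -finset.subset0; apply/fintype.subsetP => i /(fintype.subsetP B0).
  by rewrite inE.
by split; [apply/fintype.subsetP => i; rewrite inE | exact: NBC_set0 | rewrite capB0].
Qed.

Lemma Bset_last B (Delta : set V) :
  Bset alpha m (B, Delta) <-> NBC alpha B /\ Delta = capB alpha B.
Proof.
have cell_last x : cell m B x = capB alpha B.
  by apply/seteqP; split=> [y []//|y By]; split=> // i; rewrite leqNgt ltn_ord.
rewrite BsetE; split=> [[_ B_nbc [x _ ->]]|[B_nbc ->]]; first by rewrite cell_last.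
split=> //; first by apply/fintype.subsetP => i _; rewrite inE /=.
exists 0; last by rewrite cell_last.
by split=> [|i]; [exact: capB_zero | rewrite leqNgt ltn_ord].
Qed.

End Arrangement.

Theorem mainTheorem6 (R : realType) (n m : nat) (alpha : 'I_m -> 'rV[R]_n)
    (alpha_nz : forall i, alpha i != 0) :
  (forall j : 'I_m,
     (* phi_{j+1} is a well-defined map from B_j into B_{j+1} *)
     (forall p, Bset alpha j p ->
        exists q, [/\ Bset alpha j.+1 q, phi_rel alpha j p q &
                      forall q', phi_rel alpha j p q' -> q' = q]) /\
     (* injective *)
     (forall p1 p2 q, Bset alpha j p1 -> Bset alpha j p2 ->
        phi_rel alpha j p1 q -> phi_rel alpha j p2 q -> p1 = p2) /\
     (* onto B_{j+1} *)
     (forall q, Bset alpha j.+1 q ->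
        exists p, Bset alpha j p /\ phi_rel alpha j p q)) /\
  (* the induced map R(A) -> NBC(A) is well defined ... *)
  (forall D, region_A alpha D ->
     exists B, [/\ NBC alpha B, chain alpha m (finset.set0, D) (B, capB alpha B) &
       forall B', NBC alpha B' -> chain alpha m (finset.set0, D) (B', capB alpha B') ->
                  B' = B]) /\
  (* ... injective ... *)
  (forall D1 D2 B, region_A alpha D1 -> region_A alpha D2 -> NBC alpha B ->
     chain alpha m (finset.set0, D1) (B, capB alpha B) ->
     chain alpha m (finset.set0, D2) (B, capB alpha B) -> D1 = D2) /\
  (* ... and onto NBC(A). *)
  (forall B, NBC alpha B ->
     exists D, region_A alpha D /\ chain alpha m (finset.set0, D) (B, capB alpha B)).
Proof.
have start D : region_A alpha D -> Bset alpha 0 (finset.set0, D).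
  by move=> D_region; apply/Bset_first.
split.
  by move=> j; split; [exact: phi_functional | split; [exact: phi_injective | exact: phi_surjective]].
split.
  move=> D /start /(chain_functional (leqnn m))[[B Delta] [/Bset_last[B_nbc ->] D_B uniq]].
  by exists B; split=> // B' _ /uniq[].
split.
  move=> D1 D2 B /start D1_B /start D2_B _ D1_chain D2_chain.
  by case: (chain_injective (leqnn m) D1_B D2_B D1_chain D2_chain).
move=> B B_nbc; have /(chain_surjective (leqnn m))[[B0 D] D_B D_chain] :
    Bset alpha m (B, capB alpha B) by exact/Bset_last.
by move: D_B D_chain => /(Bset_first _ _ alpha_nz)[-> D_region]; exists D.
Qed.
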